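(* Let $N\ge 2$ be an integer. Let $G$ be a finite, simple, connected, bipartite graph with at least one edge and adjacency matrix $A$. Suppose that for every edge $\{p,q\}$ of $G$ and every integer $j\ge1$, $(A^{2j+1})_{pq}=\frac{(N-1)^{2j+1}+1}{N}$. Then: (a) the spectral radius of $A$ equals $N-1$; (b) $G$ is regular, with every vertex of degree $N-1$. *)

From HB Require Import structures.
From mathcomp Require Import all_boot all_order all_algebra all_field.
Set Implicit Arguments. Unset Strict Implicit. Unset Printing Implicit Defensive.
Import Order.TTheory GRing.Theory Num.Theory.
Local Open Scope ring_scope.

Definition simple_graph n (e : rel 'I_n) : Prop :=
  (forall x y, e x y = e y x) /\ (forall x, ~~ e x x).

Definition connected_graph n (e : rel 'I_n) : Prop :=
  forall x y, connect e x y.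

Definition bipartite_graph n (e : rel 'I_n) : Prop :=
  exists c : 'I_n -> bool, forall x y, e x y -> c x != c y.

Definition has_edge n (e : rel 'I_n) : Prop := exists x y, e x y.

Definition adjmx n (e : rel 'I_n) : 'M[algC]_n :=
  \matrix_(i, j) (e i j)%:R.

Definition spectral_radius n (A : 'M[algC]_n) (r : algC) : Prop :=
  (exists2 l, eigenvalue A l & `|l| = r) /\
  (forall l, eigenvalue A l -> `|l| <= r).

Definition degree n (e : rel 'I_n) (x : 'I_n) : nat := #|[set y | e x y]|.

From HB Require Import structures.
From mathcomp Require Import all_boot all_order all_algebra all_field.
From mathcomp Require Import ring lra zify.
Import Order.TTheory GRing.Theory Num.Theory.
Set Implicit Arguments. Unset Strict Implicit.
Local Open Scope ring_scope.

(* Write x = N - 1.  Since (x^k + 1)/(x + 1) = (x^k - (-1)^k)/(x + 1) for odd k,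
   the hypothesis says that for every odd polynomial f and every edge pq,
   f(A)_pq = (f(x) - f(-1))/(x + 1).  For f(t) = t (t^2 - 1) (t^2 - x^2) this
   makes the diagonal of f(A)^2 = A (f^2/t)(A) vanish, so the symmetric matrix
   f(A) is zero.  Then Z = (A^2 - 1)(A^2 - x^2) satisfies Z^2 = x^2 Z, so Z is
   positive semidefinite, and its diagonal entries x (x - deg v) give
   deg v <= x.  Conversely, on an edge pq the x^2 - x + 1 walks of length 3
   from p to q number at most deg p * deg q, which with deg q <= x forces
   deg p >= x.  A regular graph has its degree as spectral radius by the
   row-sum bound. *)

Section SymmetricMatrix.
Variables (R : realFieldType) (n : nat).
Implicit Type M : 'M[R]_n.

Lemma sym_mx_sqr_diag M i : M^T = M -> (M *m M) i i = \sum_j M i j ^+ 2.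
Proof.
by move=> tM; rewrite mxE; apply: eq_bigr => j _; rewrite expr2 -{2}tM mxE.
Qed.

Lemma sym_mx_eq0 M : M^T = M -> (forall i, (M *m M) i i = 0) -> M = 0.
Proof.
move=> tM MM0; apply/matrixP => i j; rewrite mxE.
have /eqP := MM0 i; rewrite sym_mx_sqr_diag // psumr_eq0 => [|k _];
  last exact: sqr_ge0.
by move=> /allP/(_ j (mem_index_enum j)); rewrite /= sqrf_eq0 => /eqP.
Qed.

Lemma sym_mx_diag_ge0 M k i :
  M^T = M -> M *m M = k *: M -> 0 < k -> 0 <= M i i.
Proof.
move=> tM MM k_gt0; rewrite -(pmulr_rge0 _ k_gt0).
have := sym_mx_sqr_diag i tM; rewrite MM mxE => ->.
by apply: sumr_ge0 => j _; exact: sqr_ge0.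
Qed.

End SymmetricMatrix.

Lemma trmx_horner_mx (R : comNzRingType) n (A : 'M[R]_n.+1) p :
  (horner_mx A p)^T = horner_mx A^T p.
Proof.
elim/poly_ind: p => [|p c IHp]; first by rewrite !rmorph0 trmx0.
rewrite !rmorphD !rmorphM /= !horner_mx_X !horner_mx_C linearD /= tr_scalar_mx.
by rewrite -mulmxE trmx_mul IHp (comm_horner_mx p (erefl (A^T *m A^T))).
Qed.

Section RowSums.
Variables (F : numFieldType) (n : nat) (M : 'M[F]_n) (d : F).

Lemma eigenvalue_const_colsum :
  (0 < n)%N -> (forall j, \sum_i M i j = d) -> eigenvalue M d.
Proof.
move=> n_gt0 colsum; apply/eigenvalueP; exists (const_mx 1).
  apply/rowP => j; rewrite !mxE mulr1 -(colsum j).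
  by apply: eq_bigr => i _; rewrite mxE mul1r.
apply/eqP => /rowP/(_ (Ordinal n_gt0)).
by rewrite !mxE => /eqP; rewrite oner_eq0.
Qed.

Lemma eigenvalue_norm_le_rowsum l : (forall i j, 0 <= M i j) ->
  (forall i, \sum_j M i j = d) -> eigenvalue M l -> `|l| <= d.
Proof.
move=> M_ge0 rowsum /eigenvalueP[v vM v_neq0].
set S := \sum_j `|v 0 j|.
have S_gt0 : 0 < S.
  rewrite lt_def sumr_ge0 ?andbT => [|j _]; last exact: normr_ge0.
  apply: contra v_neq0; rewrite psumr_eq0 => [/allP v0|j _];
    last exact: normr_ge0.
  apply/eqP/rowP => j; rewrite mxE; apply/eqP; rewrite -normr_eq0.
  exact: v0 (mem_index_enum j).
rewrite -(ler_pM2r S_gt0).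
have -> : `|l| * S = \sum_j `|(v *m M) 0 j|.
  by rewrite mulr_sumr; apply: eq_bigr => j _; rewrite vM mxE normrM.
have -> : d * S = \sum_i \sum_j `|v 0 i| * M i j.
  rewrite mulr_sumr; apply: eq_bigr => i _.
  by rewrite -(rowsum i) mulrC mulr_sumr.
rewrite exchange_big /=; apply: ler_sum => j _.
rewrite mxE; apply: le_trans (ler_norm_sum _ _ _) _.
by apply: ler_sum => i _; rewrite normrM (ger0_norm (M_ge0 i j)).
Qed.

End RowSums.

Definition adjacency_mx (R : pzSemiRingType) n (e : rel 'I_n) : 'M[R]_n :=
  \matrix_(i, j) (e i j)%:R.

Lemma adjacency_mx_rowsum (R : pzSemiRingType) n (e : rel 'I_n) i :
  \sum_j adjacency_mx R e i j = (degree e i)%:R.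
Proof.
rewrite /degree -sumr_const [RHS]big_mkcond /=; apply: eq_bigr => j _.
by rewrite mxE inE; case: (e i j).
Qed.

Section OddWalks.
Variables (R : realFieldType) (n : nat) (e : rel 'I_n.+1) (m : nat).
Hypotheses (e_sym : symmetric e) (m_gt0 : (0 < m)%N).
Local Notation A := (adjacency_mx R e).
Local Notation x := (m%:R : R).
Local Notation deg i := ((degree e i)%:R : R).
Hypothesis odd_walks : forall p q, e p q -> forall j,
  (A ^+ (2 * j + 1)) p q = (x ^+ (2 * j + 1) + 1) / (x + 1).

Lemma adjacency_mx_tr : A^T = A.
Proof. by apply/matrixP => i j; rewrite !mxE e_sym. Qed.

Lemma horner_adjacency_tr p : (horner_mx A p)^T = horner_mx A p.
Proof. by rewrite trmx_horner_mx adjacency_mx_tr. Qed.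

Lemma mul_adjacency_entry (B : 'M[R]_n.+1) i j :
  (A *m B) i j = \sum_(k | e i k) B k j.
Proof.
rewrite mxE [RHS]big_mkcond /=; apply: eq_bigr => k _.
by rewrite mxE; case: (e i k); rewrite ?mul1r ?mul0r.
Qed.

Lemma odd_poly_edge_entry g p q : e p q ->
  horner_mx A ('X * (g \Po 'X^2)) p q = (x * g.[x ^+ 2] + g.[1]) / (x + 1).
Proof.
move=> epq; rewrite comp_polyE mulr_sumr rmorph_sum summxE !horner_coef.
rewrite mulr_sumr -big_split mulr_suml; apply: eq_bigr => i _ /=.
rewrite -scalerAr -exprM -exprS linearZ rmorphXn /= horner_mx_X mxE.
rewrite -[(2 * i).+1]addn1 odd_walks // addn1 exprS exprM expr1n.
by field; rewrite natr1 pnatr_eq0.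
Qed.

Lemma sum_neighbors_const a i : \sum_(k | e i k) a = deg i * a.
Proof. by rewrite sumr_const /degree cardsE mulr_natl. Qed.

Lemma even_poly_diag_entry g i :
  horner_mx A ('X^2 * (g \Po 'X^2)) i i =
  deg i * ((x * g.[x ^+ 2] + g.[1]) / (x + 1)).
Proof.
rewrite expr2 -mulrA rmorphM /= horner_mx_X -mulmxE mul_adjacency_entry.
rewrite -sum_neighbors_const; apply: eq_bigr => k eik.
by rewrite odd_poly_edge_entry // e_sym.
Qed.

(* The roots 1 and x^2 are the squares of the expected eigenvalues +-1, +-x. *)
Definition eigsq_poly : {poly R} := ('X - 1) * ('X - (x ^+ 2)%:P).
Definition eigsq_quo : {poly R} := 'X - (1 + x ^+ 2)%:P.

Lemma eigsq_poly_comp :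
  eigsq_poly \Po 'X^2 = 'X^2 * (eigsq_quo \Po 'X^2) + (x ^+ 2)%:P.
Proof.
have -> : eigsq_poly = 'X * eigsq_quo + (x ^+ 2)%:P.
  by rewrite /eigsq_poly /eigsq_quo polyCD polyC1; ring.
by rewrite comp_polyD comp_polyM comp_polyX comp_polyC.
Qed.

Lemma eigsq_poly_root_sqr : eigsq_poly.[x ^+ 2] = 0.
Proof. by rewrite hornerM !hornerXsubC subrr mulr0. Qed.

Lemma eigsq_poly_root1 : eigsq_poly.[1] = 0.
Proof. by rewrite hornerM !hornerXsubC subrr mul0r. Qed.

Lemma adjacency_odd_root : horner_mx A ('X * (eigsq_poly \Po 'X^2)) = 0.
Proof.
apply: sym_mx_eq0 => [|i]; first exact: horner_adjacency_tr.
rewrite mulmxE -rmorphM.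
have -> : 'X * (eigsq_poly \Po 'X^2) * ('X * (eigsq_poly \Po 'X^2)) =
          'X^2 * ((eigsq_poly * eigsq_poly) \Po 'X^2).
  by rewrite (comp_polyM eigsq_poly eigsq_poly); ring.
rewrite even_poly_diag_entry !(hornerM eigsq_poly).
by rewrite eigsq_poly_root_sqr eigsq_poly_root1 !mulr0 add0r mul0r mulr0.
Qed.

Lemma eigsq_poly_mx_sqr :
  horner_mx A (eigsq_poly \Po 'X^2) *m horner_mx A (eigsq_poly \Po 'X^2) =
  x ^+ 2 *: horner_mx A (eigsq_poly \Po 'X^2).
Proof.
apply/eqP; rewrite -subr_eq0 mulmxE -rmorphM -linearZ -rmorphB /=.
have -> : (eigsq_poly \Po 'X^2) * (eigsq_poly \Po 'X^2)
            - x ^+ 2 *: (eigsq_poly \Po 'X^2) =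
          'X * (eigsq_poly \Po 'X^2) * ('X * (eigsq_quo \Po 'X^2)).
  by rewrite eigsq_poly_comp -mul_polyC; ring.
by rewrite rmorphM /= adjacency_odd_root mul0r.
Qed.

Lemma eigsq_poly_mx_diag i :
  horner_mx A (eigsq_poly \Po 'X^2) i i = x * (x - deg i).
Proof.
rewrite eigsq_poly_comp rmorphD /= horner_mx_C mxE even_poly_diag_entry.
rewrite mxE eqxx mulr1n.
by rewrite /eigsq_quo !hornerXsubC; field; rewrite natr1 pnatr_eq0.
Qed.

Lemma degree_le i : (degree e i <= m)%N.
Proof.
have x_gt0 : 0 < x by rewrite ltr0n.
have := sym_mx_diag_ge0 i (horner_adjacency_tr _) eigsq_poly_mx_sqr
  (exprn_gt0 2 x_gt0).
by rewrite eigsq_poly_mx_diag (pmulr_rge0 _ x_gt0) subr_ge0 ler_nat.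
Qed.

Lemma adjacency_cube_le p q : (A ^+ 3) p q <= deg p * deg q.
Proof.
have sqr_le a : (A ^+ 2) a q <= deg q.
  rewrite expr2 -mulmxE mul_adjacency_entry -adjacency_mx_rowsum big_mkcond /=.
  by apply: ler_sum => k _; case: (e a k); rewrite !mxE ?ler0n // e_sym.
rewrite exprS -mulmxE mul_adjacency_entry -sum_neighbors_const.
by apply: ler_sum => a _; exact: sqr_le.
Qed.

Lemma degree_ge p q : e p q -> (m <= degree e p)%N.
Proof.
move=> epq; have := adjacency_cube_le p q.
have -> : (A ^+ 3) p q = x * x - x + 1.
  by rewrite (odd_walks epq 1); field; rewrite natr1 pnatr_eq0.
move=> cube_le.
have : ((m * m).+1 <= degree e p * degree e q + m)%N.
  by rewrite -(ler_nat R) -addn1 !natrD !natrM; lra.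
by have := degree_le q; nia.
Qed.

End OddWalks.

Lemma adjmx_exp_entry n (e : rel 'I_n) k p q :
  (adjmx e ^+ k) p q = ratr ((adjacency_mx rat e ^+ k) p q).
Proof.
have -> : adjmx e = map_mx ratr (adjacency_mx rat e).
  by apply/matrixP => i j; rewrite !mxE ratr_nat.
by rewrite -rmorphXn mxE.
Qed.

Lemma regular_spectral_radius n (e : rel 'I_n) d : (0 < n)%N -> symmetric e ->
  (forall v, degree e v = d) -> spectral_radius (adjmx e) d%:R.
Proof.
move=> n_gt0 e_sym deg_d.
have rowsum i : \sum_j adjmx e i j = d%:R.
  by rewrite -(deg_d i); exact: adjacency_mx_rowsum.
split.
  exists d%:R; last by rewrite normr_nat.
  apply: eigenvalue_const_colsum n_gt0 _ => j; rewrite -(rowsum j).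
  by apply: eq_bigr => i _; rewrite !mxE e_sym.
by move=> l; apply: eigenvalue_norm_le_rowsum rowsum => i j; rewrite mxE ler0n.
Qed.

Lemma connected_neighbor n (e : rel 'I_n) :
  connected_graph e -> has_edge e -> forall v, exists w, e v w.
Proof.
move=> conn [x0 [y0 exy]] v; have [->|v_neq] := eqVneq v x0; first by exists y0.
case/connectP: (conn v x0) => -[/= _ v_eq|w s /= /andP[evw _] _].
  by rewrite v_eq eqxx in v_neq.
by exists w.
Qed.

Theorem proposition2 (N n : nat) (e : rel 'I_n) :
  (2 <= N)%N ->
  simple_graph e -> connected_graph e -> bipartite_graph e -> has_edge e ->
  (forall p q, e p q -> forall j : nat, (1 <= j)%N ->
     (adjmx e ^+ (2 * j + 1)) p q = ((N%:R - 1) ^+ (2 * j + 1) + 1) / N%:R) ->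
  spectral_radius (adjmx e) (N%:R - 1) /\ (forall x, degree e x = N.-1).
Proof.
move=> N_ge2 [e_sym _] conn _ edge walks.
have [x0 _] := edge; case: n => [|n] in e x0 e_sym conn edge walks *.
  by case: x0.
have N_eq : N = N.-1.+1 by rewrite prednK // ltnW.
have m_gt0 : (0 < N.-1)%N by rewrite -ltnS -N_eq.
have natN : N%:R = (N.-1)%:R + 1 :> algC by rewrite natr1 -N_eq.
(* The positivity arguments need an ordered field, hence the move to rat. *)
have odd_walks p q : e p q -> forall j,
    (adjacency_mx rat e ^+ (2 * j + 1)) p q =
    ((N.-1)%:R ^+ (2 * j + 1) + 1) / ((N.-1)%:R + 1).
  move=> epq [|j]; first by rewrite expr1 mxE epq divff // natr1 pnatr_eq0.
  apply: (fmorph_inj (@ratr algC)); rewrite -[LHS]adjmx_exp_entry walks //.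
  rewrite fmorph_div rmorphD rmorphXn rmorph1 !rmorphD /= !ratr_nat rmorph1.
  by rewrite natN addrK.
have deg_N v : degree e v = N.-1.
  have [w evw] := connected_neighbor conn edge v.
  by apply/eqP; rewrite eqn_leq (degree_le e_sym m_gt0 odd_walks)
    (degree_ge e_sym m_gt0 odd_walks evw).
split=> //; rewrite natN addrK.
exact: regular_spectral_radius.
Qed.
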